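(* Let $G^\sigma$ be an oriented graph whose underlying graph is a complete multipartite graph. If every cycle on $4$ vertices in $G^\sigma$ is evenly-oriented, then any two vertices lying in the same part of the multipartition are uniform twins or opposite twins.
   Context: An oriented graph $G^\sigma$ is a simple graph $G$ (underlying graph) together with an orientation of each edge; write $s_{xy}=1$ if there is an arc from $x$ to $y$, $s_{xy}=-1$ if there is an arc from $y$ to $x$, $s_{xy}=0$ otherwise. For an even cycle $u_1u_2\cdots u_ku_1$, its sign is the sign of $\prod_{i=1}^k s_{u_iu_{i+1}}$ with $u_{k+1}=u_1$; the cycle is evenly-oriented if the sign is positive and oddly-oriented if negative. For a common neighbor $w$ of two nonadjacent vertices $u,v$: the edges among $u,v,w$ have uniform orientations if the arcs go from both $u,v$ to $w$ or from $w$ to both $u,v$; opposite orientations if one arc goes from $u$ (resp. $v$) to $w$ and the other from $w$ to $v$ (resp. $u$). Nonadjacent $u,v$ are uniform (resp. opposite) twins if $N(u)=N(v)$ and for every common neighbor the edges have uniform (resp. opposite) orientations. *)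

From mathcomp Require Import all_boot all_order all_algebra.
Set Implicit Arguments. Unset Strict Implicit. Unset Printing Implicit Defensive.
Import GRing.Theory Num.Theory.
Local Open Scope ring_scope.

Definition oriented_graph (T : finType) (arc : rel T) : Prop :=
  (forall x, ~~ arc x x) /\ (forall x y, arc x y -> ~~ arc y x).

Definition adj (T : finType) (arc : rel T) : rel T :=
  fun x y => arc x y || arc y x.

Definition sgn (T : finType) (arc : rel T) (x y : T) : int :=
  if arc x y then 1 else if arc y x then -1 else 0.

Definition complete_multipartite (T : finType) (arc : rel T) (part : T -> nat) : Prop :=
  forall x y, adj arc x y = (part x != part y).

Definition all_C4_even (T : finType) (arc : rel T) : Prop :=
  forall u1 u2 u3 u4 : T,
    uniq [:: u1; u2; u3; u4] ->
    adj arc u1 u2 -> adj arc u2 u3 -> adj arc u3 u4 -> adj arc u4 u1 ->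
    0 < sgn arc u1 u2 * sgn arc u2 u3 * sgn arc u3 u4 * sgn arc u4 u1.

Definition same_nbhd (T : finType) (arc : rel T) (u v : T) : Prop :=
  forall w, adj arc u w = adj arc v w.

Definition uniform_twins (T : finType) (arc : rel T) (u v : T) : Prop :=
  ~~ adj arc u v /\ same_nbhd arc u v /\
  forall w, adj arc u w -> adj arc v w ->
    (arc u w && arc v w) || (arc w u && arc w v).

Definition opposite_twins (T : finType) (arc : rel T) (u v : T) : Prop :=
  ~~ adj arc u v /\ same_nbhd arc u v /\
  forall w, adj arc u w -> adj arc v w ->
    (arc u w && arc w v) || (arc v w && arc w u).

From mathcomp Require Import all_boot all_order all_algebra.
Import GRing.Theory.
Local Open Scope ring_scope.
Set Implicit Arguments.

(* Two vertices u, v of the same part are nonadjacent with the same neighbours.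
   For a common neighbour w, the signed path u w v has sign -1 when the arcs
   between w and u, v are uniform and +1 when they are opposite.  The 4-cycle
   u w v w' u is the product of two such paths, so it is evenly oriented exactly
   when w and w' are of the same kind; hence all common neighbours are uniform
   or all are opposite. *)

Section OrientedGraph.

Variables (T : finType) (arc : rel T).
Hypothesis arc_asym : forall x y, arc x y -> ~~ arc y x.

Lemma arc_adjN {x y : T} : adj arc x y -> arc y x = ~~ arc x y.
Proof.
case/orP=> [axy | ayx].
  by rewrite axy (negbTE (arc_asym axy)).
by rewrite ayx (negbTE (arc_asym ayx)).
Qed.

Lemma sgn_adj {x y : T} : adj arc x y -> sgn arc x y = if arc x y then 1 else -1.
Proof. by rewrite /sgn => /arc_adjN ->; case: (arc x y). Qed.

Lemma adj_neq {x y : T} : adj arc x y -> x != y.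
Proof.
apply: contraTneq => ->; rewrite /adj orbb.
by apply/negP => axx; move: (arc_asym axx); rewrite axx.
Qed.

Lemma adj_sym (x y : T) : adj arc x y = adj arc y x.
Proof. by rewrite /adj orbC. Qed.

Lemma sgn_path2 (u v w : T) : adj arc u w -> adj arc v w ->
  sgn arc u w * sgn arc w v = if arc u w == arc v w then -1 else 1.
Proof.
move=> uw vw; have wv : adj arc w v by rewrite adj_sym.
rewrite (sgn_adj uw) (sgn_adj wv) (arc_adjN vw).
by case: (arc u w); case: (arc v w).
Qed.

Lemma uniform_orientation (u v w : T) : adj arc u w -> adj arc v w ->
  arc u w = arc v w -> (arc u w && arc v w) || (arc w u && arc w v).
Proof.
by move=> uw vw; rewrite (arc_adjN uw) (arc_adjN vw) => <-; case: (arc u w).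
Qed.

Lemma opposite_orientation (u v w : T) : adj arc u w -> adj arc v w ->
  arc u w != arc v w -> (arc u w && arc w v) || (arc v w && arc w u).
Proof.
by move=> uw vw; rewrite (arc_adjN uw) (arc_adjN vw); case: (arc u w); case: (arc v w).
Qed.

Lemma C4_even_same_orientation (u v w w' : T) :
  all_C4_even arc -> u != v ->
  adj arc u w -> adj arc v w -> adj arc u w' -> adj arc v w' ->
  (arc u w == arc v w) = (arc u w' == arc v w').
Proof.
move=> C4 neq_uv uw vw uw' vw'.
have [<- // | neq_ww'] := eqVneq w w'.
have uniq_cycle : uniq [:: u; w; v; w'].
  rewrite /= !inE !negb_or neq_uv neq_ww' (adj_neq uw) (adj_neq uw') (adj_neq vw').
  by rewrite [w == v]eq_sym (adj_neq vw).
have := C4 u w v w' uniq_cycle uw; rewrite adj_sym => /(_ vw vw').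
rewrite adj_sym => /(_ uw') /=.
rewrite -mulrA -(mulrA (sgn arc u w)) mulrA sgn_path2 // sgn_path2 //.
by rewrite [arc v w' == _]eq_sym; do 2 case: (_ == _).
Qed.

Lemma twins_of_same_orientation (u v : T) :
  ~~ adj arc u v -> same_nbhd arc u v ->
  (forall w w', adj arc u w -> adj arc u w' ->
     (arc u w == arc v w) = (arc u w' == arc v w')) ->
  uniform_twins arc u v \/ opposite_twins arc u v.
Proof.
move=> nuv nbhd same.
have [w /andP[uw /eqP eq_w] | no_uniform] :=
  pickP [pred w | adj arc u w && (arc u w == arc v w)].
  left; split=> //; split=> // x ux vx.
  by apply: uniform_orientation => //; apply/eqP; rewrite (same x w) // eq_w.
right; split=> //; split=> // x ux vx.
by apply: opposite_orientation => //; move: (no_uniform x); rewrite /= ux => /negbT.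
Qed.

End OrientedGraph.

Theorem lemma2p9 (T : finType) (arc : rel T) (part : T -> nat) :
  oriented_graph arc ->
  complete_multipartite arc part ->
  all_C4_even arc ->
  forall u v : T, u != v -> part u = part v ->
    uniform_twins arc u v \/ opposite_twins arc u v.
Proof.
move=> [_ asym] cm C4 u v neq_uv part_uv.
have nbhd : same_nbhd arc u v by move=> w; rewrite !cm part_uv.
apply: (twins_of_same_orientation asym) => [| // | w w' uw uw'].
  by rewrite cm part_uv eqxx.
by apply: C4_even_same_orientation; rewrite // -nbhd.
Qed.
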